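(* Let $a,b,c$ be positive integers and let $G$ be a graph whose rank cardinality vector is $(a,b,c,1)$. Then some vertex of corner rank 3 or 4 is adjacent to every vertex of corner rank 2.
   Context: All graphs are finite, nonempty, and reflexive (every vertex has a loop). $N[v]$ is the closed neighborhood of $v$ (including $v$). For distinct $v,w$, $w$ strictly corners $v$ if $N[v]\subsetneq N[w]$; $v$ is then a strict corner. Corner ranking: set $G^{(1)}=G$, $k=1$. If $G^{(k)}$ is a clique, give all its vertices rank $k$ and stop. Else if $G^{(k)}$ has no strict corners, give all its vertices rank $\infty$ and stop. Else give every strict corner of $G^{(k)}$ rank $k$, delete them to get $G^{(k+1)}$ (induced subgraph), increase $k$ and repeat. The corner rank is the largest rank of a vertex; $X_k$ is the set of rank-$k$ vertices. The rank cardinality vector of a graph of finite corner rank $\alpha$ is $(x_\alpha,\dots,x_1)$ with $x_k=|X_k|$. *)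

From mathcomp Require Import all_boot.
Set Implicit Arguments.
Unset Strict Implicit.
Unset Printing Implicit Defensive.

(* A graph is given by a finite vertex type T and an adjacency relation
   e : rel T, assumed reflexive and symmetric (hypotheses of the theorem). *)
Section CornerRank.
Variables (T : finType) (e : rel T).

Definition nbhd (S : {set T}) (v : T) : {set T} := [set w in S | e v w].

Definition is_clique (S : {set T}) : bool :=
  [forall u in S, forall v in S, e u v].

Definition strict_corners (S : {set T}) : {set T} :=
  [set v in S | [exists w in S, (w != v) && (nbhd S v \proper nbhd S w)]].

Definition stops_at (S : {set T}) : bool :=
  is_clique S || (strict_corners S == set0).

(* G^(k) for k >= 1 : G^(1) = G, G^(k+1) = G^(k) minus its strict corners *)
Definition Gk (k : nat) : {set T} :=
  iter k.-1 (fun S => S :\: strict_corners S) [set: T].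

Definition reaches (k : nat) : bool :=
  (0 < k) && [forall j : 'I_k, (0 < j) ==> ~~ stops_at (Gk j)].

(* X_k : the set of vertices of (finite) corner rank k *)
Definition Xk (k : nat) : {set T} :=
  if reaches k then
    (if is_clique (Gk k) then Gk k else strict_corners (Gk k))
  else set0.

Definition has_corner_rank (alpha : nat) : bool :=
  reaches alpha && is_clique (Gk alpha).

End CornerRank.

From mathcomp Require Import all_boot.

Set Implicit Arguments.
Unset Strict Implicit.
Unset Printing Implicit Defensive.

(* Let u be the unique vertex of rank 1, strictly cornered by z, and let
   S = G - u.  Every strict corner x of S is adjacent to u: otherwise its
   neighbourhood in G equals its neighbourhood in S, and x would already be a
   strict corner of G.  Hence x is a neighbour of z.  A vertex w of S whose
   neighbourhood in S contains that of z and is maximal among such is not a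
   strict corner of S, so it has rank at least 3, and it is adjacent to every
   strict corner of S, i.e. to every vertex of rank 2. *)

Section Corners.
Variables (T : finType) (e : rel T).

Lemma nbhdS (S S' : {set T}) v : S \subset S' -> nbhd e S v \subset nbhd e S' v.
Proof.
by move=> sSS'; apply/subsetP=> w; rewrite !inE => /andP[/(subsetP sSS') -> ->].
Qed.

Lemma strict_cornersP (S : {set T}) v :
  reflect (v \in S /\ exists2 w, w \in S & nbhd e S v \proper nbhd e S w)
          (v \in strict_corners e S).
Proof.
rewrite inE; apply: (iffP andP) => [[vS /existsP[w /and3P[wS _ vw]]]|[vS [w wS vw]]].
  by split=> //; exists w.
split=> //; apply/existsP; exists w; rewrite wS vw andbT.
by apply: contraTneq vw => ->; rewrite properxx.
Qed.

Lemma strict_corners_sub (S : {set T}) : strict_corners e S \subset S.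
Proof. by apply/subsetP=> v /strict_cornersP[]. Qed.

Lemma exists_noncorner_dominating (S : {set T}) z : z \in S ->
  exists2 w, w \in S :\: strict_corners e S & nbhd e S z \subset nbhd e S w.
Proof.
move=> zS; pose P := [pred w | (w \in S) && (nbhd e S z \subset nbhd e S w)].
have Pz : P z by rewrite /= zS subxx.
have [w /andP[wS zw] w_max] := arg_maxnP (fun w => #|nbhd e S w|) Pz.
exists w => //; rewrite inE wS andbT.
apply/strict_cornersP => -[_ [w' w'S ww']].
have Pw' : P w' by rewrite /= w'S (subset_trans zw (proper_sub ww')).
by have := w_max w' Pw'; rewrite /= leqNgt proper_card.
Qed.

Lemma strict_corners_widen (S S' : {set T}) x :
  S \subset S' -> nbhd e S' x \subset S ->
  x \in strict_corners e S -> x \in strict_corners e S'.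
Proof.
move=> sSS' sxS /strict_cornersP[xS [y yS xy]].
have nbhd_x : nbhd e S' x = nbhd e S x.
  apply/eqP; rewrite eqEsubset (nbhdS x sSS') andbT.
  by apply/subsetP=> v vx; rewrite inE (subsetP sxS) //; move: vx; rewrite inE => /andP[].
apply/strict_cornersP; split; first exact: (subsetP sSS').
exists y; first exact: (subsetP sSS').
by rewrite nbhd_x (proper_sub_trans xy (nbhdS y sSS')).
Qed.

Hypothesis e_sym : symmetric e.

Lemma unique_corner_adj (S : {set T}) u x :
  strict_corners e S = [set u] -> x \in strict_corners e (S :\ u) -> e u x.
Proof.
move=> cornersS x_corner; apply/negPn/negP => nux.
have xSu := subsetP (strict_corners_sub (S :\ u)) x x_corner.
have sxSu : nbhd e S x \subset S :\ u.
  apply/subsetP=> v; rewrite !inE => /andP[vS xv]; rewrite vS andbT.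
  by apply: contraNneq nux => vu; rewrite e_sym -vu.
have := strict_corners_widen (subsetDl S [set u]) sxSu x_corner.
by rewrite cornersS inE => /eqP xu; rewrite xu !inE eqxx in xSu.
Qed.

Lemma unique_corner_dominator (S : {set T}) u :
  strict_corners e S = [set u] ->
  exists2 w, w \in (S :\ u) :\: strict_corners e (S :\ u)
           & {in strict_corners e (S :\ u), forall x, e w x}.
Proof.
move=> cornersS.
have /strict_cornersP[_ [z zS uz]] : u \in strict_corners e S by rewrite cornersS set11.
have zSu : z \in S :\ u.
  by rewrite !inE zS andbT; apply: contraTneq uz => ->; rewrite properxx.
have [w w_noncorner zw] := exists_noncorner_dominating zSu.
exists w => // x x_corner.
have xSu := subsetP (strict_corners_sub (S :\ u)) x x_corner.
have xS : x \in S by move: xSu; rewrite inE => /andP[].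
have : x \in nbhd e S z.
  by apply: (subsetP (proper_sub uz)); rewrite inE xS (unique_corner_adj cornersS).
rewrite inE => /andP[_ zx].
have : x \in nbhd e (S :\ u) w by apply: (subsetP zw); rewrite inE xSu.
by rewrite inE => /andP[].
Qed.

End Corners.

Section CornerRanking.
Variables (T : finType) (e : rel T).

Lemma GkS k : 0 < k -> Gk e k.+1 = Gk e k :\: strict_corners e (Gk e k).
Proof. by case: k. Qed.

Lemma Gk_split k : 0 < k -> Gk e k = strict_corners e (Gk e k) :|: Gk e k.+1.
Proof.
move=> k_gt0; rewrite GkS // -{1}(setID (Gk e k) (strict_corners e (Gk e k))).
by rewrite (setIidPr (strict_corners_sub _ _)).
Qed.

Lemma reaches_leq j k : 0 < j -> j <= k -> reaches e k -> reaches e j.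
Proof.
move=> j_gt0 le_jk /andP[_ /forallP nstop]; rewrite /reaches j_gt0.
by apply/forallP=> i; exact: (nstop (widen_ord le_jk i)).
Qed.

Variable n : nat.
Hypothesis rank_n : has_corner_rank e n.

Lemma Xk_corner_rank : Xk e n = Gk e n.
Proof. by case/andP: rank_n => reach_n clique_n; rewrite /Xk reach_n clique_n. Qed.

Lemma Xk_lt_corner_rank j : 0 < j < n -> Xk e j = strict_corners e (Gk e j).
Proof.
case/andP=> j_gt0 lt_jn; have [reach_n _] := andP rank_n.
have [_ /forallP/(_ (Ordinal lt_jn))] := andP reach_n.
rewrite /= j_gt0 /stops_at negb_or => /andP[/negbTE nclique _].
by rewrite /Xk (reaches_leq j_gt0 (ltnW lt_jn) reach_n) nclique.
Qed.

End CornerRanking.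

Theorem lemma3p23 (T : finType) (e : rel T) (a b c : nat) :
  reflexive e -> symmetric e -> 0 < #|T| ->
  0 < a -> 0 < b -> 0 < c ->
  has_corner_rank e 4 ->
  #|Xk e 4| = a -> #|Xk e 3| = b -> #|Xk e 2| = c -> #|Xk e 1| = 1 ->
  exists2 v, v \in Xk e 3 :|: Xk e 4 & forall w, w \in Xk e 2 -> e v w.
Proof.
move=> _ e_sym _ _ _ _ rank4 _ _ _ card_X1.
rewrite (Xk_lt_corner_rank rank4 (_ : 0 < 1 < 4)) // in card_X1.
have /cards1P[u corners1] : #|strict_corners e (Gk e 1)| == 1 by rewrite card_X1.
have G2 : Gk e 2 = Gk e 1 :\ u by rewrite GkS // corners1.
have [w w_G3 w_adj] := unique_corner_dominator e_sym corners1.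
exists w.
  rewrite (Xk_corner_rank rank4) (Xk_lt_corner_rank rank4 (_ : 0 < 3 < 4)) //.
  by rewrite -Gk_split // GkS // G2.
by move=> x; rewrite (Xk_lt_corner_rank rank4 (_ : 0 < 2 < 4)) // G2; exact: w_adj.
Qed.
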